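(* Let $\mathcal{H}$ be a complex Hilbert space of finite dimension $d\geq 1$, let $N_d = 3^d\cdot \mathrm{lcm}\{3^1-2^1,3^2-2^2,\ldots,3^d-2^d\}$, and let $U,V$ be unitary operators on $\mathcal{H}$ with $V^{-1}U^2V=U^3$. Then for every $\lambda\in\mathbb{R}$ such that $e^{2\pi i\lambda}$ is an eigenvalue of $U$, one has $N_d\lambda\in\mathbb{Z}$. Consequently, if $e^{2\pi i\lambda}$ is an eigenvalue of $U$, then $-e^{2\pi i\lambda}$ is not an eigenvalue of $U$, and every eigenvector of $U^2$ is an eigenvector of $U$. *)

From HB Require Import structures.
From mathcomp Require Import all_boot all_order all_algebra.
Set Implicit Arguments. Unset Strict Implicit. Unset Printing Implicit Defensive.
Import Order.TTheory GRing.Theory Num.Theory.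
Local Open Scope ring_scope.

Definition adjoint (C : numClosedFieldType) (d : nat) (A : 'M[C]_d) : 'M[C]_d :=
  (map_mx Num.conj A)^T.

Definition unitary_mx (C : numClosedFieldType) (d : nat) (A : 'M[C]_d) : Prop :=
  A *m adjoint A = 1%:M /\ adjoint A *m A = 1%:M.

Definition is_eigenvector (C : numClosedFieldType) (d : nat) (A : 'M[C]_d)
  (v : 'cV[C]_d) : Prop := v != 0 /\ exists z : C, A *m v = z *: v.

Definition is_eigenvalue (C : numClosedFieldType) (d : nat) (A : 'M[C]_d)
  (z : C) : Prop := exists v : 'cV[C]_d, v != 0 /\ A *m v = z *: v.

Definition Nd (d : nat) : nat :=
  (3 ^ d * \big[lcmn/1%N]_(1 <= k < d.+1) (3 ^ k - 2 ^ k))%N.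

From HB Require Import structures.
From mathcomp Require Import all_boot all_order all_algebra.
Import Order.TTheory GRing.Theory Num.Theory.
Local Open Scope ring_scope.

(* If z is an eigenvalue of U, then z^3 is an eigenvalue of U^3, hence of
   the conjugate matrix U^2, so a square root w of z^3 is an eigenvalue of U.
   Iterating gives eigenvalues z = w_0, ..., w_d of U with w_(k+1)^2 = w_k^3.
   As U has at most d eigenvalues, w_i = w_j for some i < j <= d; with
   k = j - i this gives w_i^(2^k) = w_i^(3^k), so w_i^(3^k - 2^k) = 1, while
   z^(3^i) = w_i^(2^i); thus z is a root of unity of order dividing
   3^i (3^k - 2^k), a divisor of N_d.  As N_d is odd, z and -z are never both
   eigenvalues.  Finally, if U^2 v = r^2 v then U v + r v and U v - r v lie in
   the r- and (-r)-eigenspaces of U, so one of them vanishes and v is an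
   eigenvector of U. *)

Lemma root_pigeonhole {R : idomainType} {p : {poly R}} (f : nat -> R) :
  p != 0 -> (forall k, (k < size p)%N -> root p (f k)) ->
  exists i j, [/\ (i < j)%N, (j < size p)%N & f i = f j].
Proof.
move=> p_neq0 f_root.
pose s := [seq f k | k <- iota 0 (size p)].
have size_s : size s = size p by rewrite size_map size_iota.
have : ~~ uniq s.
  apply/negP => s_uniq.
  have s_roots : all (root p) s.
    apply/allP => x /mapP [k]; rewrite mem_iota add0n => /andP [_ lt_kp] ->.
    exact: f_root.
  by have := max_poly_roots p_neq0 s_roots s_uniq; rewrite size_s ltnn.
case/(uniqPn 0) => i [j [lt_ij]]; rewrite size_s => lt_jp.
rewrite !(nth_map 0%N) ?size_iota ?(ltn_trans lt_ij) // !nth_iota ?(ltn_trans lt_ij) //.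
by rewrite !add0n => fij; exists i, j.
Qed.

Lemma finite_chain {T : Type} {P : T -> Prop} {R : T -> T -> Prop} :
  (forall x, P x -> exists2 y, P y & R x y) ->
  forall n x, P x -> exists f : nat -> T,
    [/\ f 0%N = x, forall k, (k <= n)%N -> P (f k)
      & forall k, (k < n)%N -> R (f k) (f k.+1)].
Proof.
move=> succ n x Px; elim: n => [|n [f [f0 fP fR]]].
  by exists (fun=> x); split=> // k; rewrite leqn0 => /eqP ->.
have [y Py Rfy] := succ _ (fP n (leqnn n)).
exists (fun k => if k == n.+1 then y else f k); split=> // k.
  by case: eqP => [//|/eqP k_neq]; rewrite leq_eqVlt (negPf k_neq) => /fP.
rewrite ltnS eqSS => le_kn; rewrite (ltn_eqF (le_kn : (k < n.+1)%N)).
by case: eqP => [->|/eqP k_neq]; last by apply: fR; rewrite ltn_neqAle k_neq.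
Qed.

Lemma chain_pow {R : pzSemiRingType} {f : nat -> R} {a b n : nat} :
  (forall k, (k < n)%N -> f k.+1 ^+ a = f k ^+ b) ->
  forall i k, (i + k <= n)%N -> f (i + k)%N ^+ (a ^ k) = f i ^+ (b ^ k).
Proof.
move=> f_rel i; elim=> [|k IHk] le_n; first by rewrite addn0 !expn0 !expr1.
rewrite addnS expnS exprM f_rel -?addnS // -exprM mulnC exprM.
by rewrite IHk 1?ltnW -?addnS // -exprM -expnSr.
Qed.

Lemma expf_eq_sub (F : fieldType) (x : F) (m n : nat) :
  x != 0 -> (m <= n)%N -> x ^+ m = x ^+ n -> x ^+ (n - m) = 1.
Proof.
move=> x_neq0 le_mn xmn; apply: (mulfI (expf_neq0 m x_neq0)).
by rewrite -exprD subnKC // mulr1.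
Qed.

Lemma dvdn_biglcm_nat (F : nat -> nat) (m n k : nat) :
  (m <= k < n)%N -> (F k %| \big[lcmn/1%N]_(m <= i < n) F i)%N.
Proof.
case/andP=> le_mk lt_kn; rewrite big_geq_mkord.
by apply: (@biglcmn_sup _ (Ordinal lt_kn)); rewrite ?le_mk.
Qed.

Lemma odd_lcmn (a b : nat) : odd a -> odd b -> odd (lcmn a b).
Proof.
move=> odd_a odd_b; rewrite -[odd _]negbK -dvdn2; apply/negP => two_lcm.
have : (2 %| a * b)%N.
  by apply: dvdn_trans two_lcm _; rewrite dvdn_lcm dvdn_mulr ?dvdn_mull.
by rewrite dvdn2 oddM odd_a odd_b.
Qed.

(* N_d is odd: it is a product of odd numbers, since 3^k - 2^k is odd. *)
Lemma odd_Nd (d : nat) : odd (Nd d).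
Proof.
rewrite /Nd oddM oddX orbT /= big_nat_cond.
apply: (big_ind odd) => //; first exact: odd_lcmn.
move=> [|k] /andP [/andP [//= _ _] _].
by rewrite oddB ?leq_exp2r // !oddX.
Qed.

Section Eigenvalues.
Context {C : numClosedFieldType} {d : nat}.
Implicit Types (A B P : 'M[C]_d) (v : 'cV[C]_d) (z : C).

(* Eigenvalues for the column convention are roots of char_poly A^T. *)
Lemma eigenvalue_char_root {A z} : is_eigenvalue A z -> root (char_poly A^T) z.
Proof.
move=> [v [v_neq0 Av]]; rewrite -eigenvalue_root_char; apply/eigenvalueP.
by exists v^T; rewrite ?trmx_eq0 // -trmx_mul Av linearZ.
Qed.

(* A d x d matrix has at most d eigenvalues, so d+1 of them repeat. *)
Lemma eigenvalue_pigeonhole {A} {f : nat -> C} :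
  (forall k, (k <= d)%N -> is_eigenvalue A (f k)) ->
  exists i j, [/\ (i < j)%N, (j <= d)%N & f i = f j].
Proof.
move=> f_eig; have p_neq0 := monic_neq0 (char_poly_monic A^T).
have [|i [j]] := root_pigeonhole f p_neq0.
  by move=> k; rewrite size_char_poly ltnS => /f_eig/eigenvalue_char_root.
by rewrite size_char_poly ltnS => -[]; exists i, j.
Qed.

Lemma eigenvalue_unit_neq0 {A z} : A \in unitmx -> is_eigenvalue A z -> z != 0.
Proof.
move=> A_unit [v [v_neq0 Av]]; apply: contraNneq v_neq0 => z0.
by rewrite -[v]mul1mx -(mulVmx A_unit) -mulmxA Av z0 scale0r mulmx0.
Qed.

Lemma eigenvalue_cube {A z} : is_eigenvalue A z -> is_eigenvalue (A *m A *m A) (z ^+ 3).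
Proof.
move=> [v [v_neq0 Av]]; exists v; split=> //.
by rewrite -!mulmxA Av -!scalemxAr Av -scalemxAr Av !scalerA -expr2 -exprSr.
Qed.

Lemma eigenvalue_similar {A B P z} :
  P \in unitmx -> A *m P = P *m B -> is_eigenvalue B z -> is_eigenvalue A z.
Proof.
move=> P_unit AP_PB [v [v_neq0 Bv]]; exists (P *m v); split.
  apply: contraNneq v_neq0 => Pv0.
  by rewrite -[v]mul1mx -(mulVmx P_unit) -mulmxA Pv0 mulmx0.
by rewrite mulmxA AP_PB -mulmxA Bv scalemxAr.
Qed.

Lemma sqr_eigen_split {A v} {r : C} : A *m A *m v = r ^+ 2 *: v ->
  A *m (A *m v + r *: v) = r *: (A *m v + r *: v) /\
  A *m (A *m v - r *: v) = - r *: (A *m v - r *: v).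
Proof.
move=> AAv; rewrite mulmxDr mulmxBr mulmxA AAv -!scalemxAr expr2 -scalerA.
by split; [rewrite scalerDr addrC | rewrite scaleNr scalerBr opprB].
Qed.

Lemma eigenvalue_sqrt {A} {mu : C} :
  is_eigenvalue (A *m A) mu -> exists2 w, is_eigenvalue A w & w ^+ 2 = mu.
Proof.
move=> [v [v_neq0 AAv]]; set r := sqrtC mu.
have AAv_r : A *m A *m v = r ^+ 2 *: v by rewrite sqrtCK.
have [Ay_r _] := sqr_eigen_split AAv_r.
have [y0|y_neq0] := eqVneq (A *m v + r *: v) 0.
  exists (- r); last by rewrite sqrrN sqrtCK.
  by exists v; split=> //; apply/eqP; rewrite scaleNr -subr_eq0 opprK y0.
by exists r; [exists (A *m v + r *: v) | rewrite sqrtCK].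
Qed.

Lemma eigenvector_of_sqr {A v} :
  (forall z, is_eigenvalue A z -> ~ is_eigenvalue A (- z)) ->
  is_eigenvector (A *m A) v -> is_eigenvector A v.
Proof.
move=> no_opp [v_neq0 [mu AAv]]; split=> //; set r := sqrtC mu.
have AAv_r : A *m A *m v = r ^+ 2 *: v by rewrite sqrtCK.
have [Ay Au] := sqr_eigen_split AAv_r.
have [y0|y_neq0] := eqVneq (A *m v + r *: v) 0.
  by exists (- r); apply/eqP; rewrite scaleNr -subr_eq0 opprK y0.
have [u0|u_neq0] := eqVneq (A *m v - r *: v) 0.
  by exists r; apply/eqP; rewrite -subr_eq0 u0.
by case: (no_opp r); [exists (A *m v + r *: v) | exists (A *m v - r *: v)].
Qed.

End Eigenvalues.

Section SquareCubeConjugacy.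
Context {C : numClosedFieldType} {d : nat} {U V : 'M[C]_d}.
Hypotheses (U_unit : U \in unitmx) (V_unit : V \in unitmx)
  (U2V_VU3 : U *m U *m V = V *m (U *m U *m U)).

Lemma eigenvalue_step (z : C) :
  is_eigenvalue U z -> exists2 w, is_eigenvalue U w & w ^+ 2 = z ^+ 3.
Proof.
move=> z_eig; apply: eigenvalue_sqrt.
exact: eigenvalue_similar V_unit U2V_VU3 (eigenvalue_cube z_eig).
Qed.

Lemma eigenvalue_Nd {z} : is_eigenvalue U z -> z ^+ Nd d = 1.
Proof.
move=> z_eig.
have [f [f0 f_eig f_rel]] := finite_chain eigenvalue_step d z z_eig.
have [i [j [lt_ij le_jd fij]]] := eigenvalue_pigeonhole f_eig.
set k := (j - i)%N; have ijk : (i + k)%N = j by rewrite subnKC // ltnW.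
have f_pow := chain_pow f_rel.
have le_id : (i <= d)%N := ltnW (leq_trans lt_ij le_jd).
have periodic : f i ^+ (3 ^ k - 2 ^ k) = 1.
  apply: expf_eq_sub; first exact: eigenvalue_unit_neq0 U_unit (f_eig i le_id).
    by rewrite leq_exp2r // subn_gt0.
  by rewrite {1}fij -ijk f_pow ?ijk.
have z_pow : z ^+ (3 ^ i * (3 ^ k - 2 ^ k)) = 1.
  by rewrite exprM -f0 -(f_pow 0%N) // -exprM mulnC exprM periodic expr1n.
apply: (expr_dvd z_pow); rewrite /Nd dvdn_mul ?dvdn_exp2l //.
apply: dvdn_biglcm_nat; rewrite subn_gt0 lt_ij /= ltnS.
exact: leq_trans (leq_subr _ _) le_jd.
Qed.

(* N_d being odd, z^N_d = 1 = (-z)^N_d would force -1 = 1. *)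
Lemma no_opposite_eigenvalues {z} :
  is_eigenvalue U z -> ~ is_eigenvalue U (- z).
Proof.
move=> z_eig /eigenvalue_Nd; rewrite exprNn -signr_odd odd_Nd.
rewrite (eigenvalue_Nd z_eig) expr1 mulr1 => /eqP.
by rewrite -subr_eq0 -opprD oppr_eq0 -[1 + 1]/(2%:R) pnatr_eq0.
Qed.

End SquareCubeConjugacy.

Theorem mainTheorem5 (C : numClosedFieldType) (d : nat) (hd : (0 < d)%N)
  (U V : 'M[C]_d) (hU : unitary_mx U) (hV : unitary_mx V)
  (hUV : invmx V *m (U *m U) *m V = U *m U *m U) :
  (forall z : C, is_eigenvalue U z -> z ^+ Nd d = 1) /\
  (forall z : C, is_eigenvalue U z -> ~ is_eigenvalue U (- z)) /\
  (forall v : 'cV[C]_d, is_eigenvector (U *m U) v -> is_eigenvector U v).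
Proof.
have [U_unit _] := mulmx1_unit hU.1.
have [V_unit _] := mulmx1_unit hV.1.
have U2V_VU3 : U *m U *m V = V *m (U *m U *m U).
  by rewrite -hUV !mulmxA mulmxV // mul1mx.
have no_opp := no_opposite_eigenvalues U_unit V_unit U2V_VU3.
split; first exact: eigenvalue_Nd U_unit V_unit U2V_VU3.
by split=> // v; apply: eigenvector_of_sqr.
Qed.
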